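(* Let $D$ be a nonempty subset of $\mathbb{R}^n$, let $\varepsilon\in\,]0,1[$, and let $\Lambda$ be a symmetric linear operator on $\mathbb{R}^n$ such that $$\bar\beta\,\mathrm{Id}\succeq \Lambda\succeq \underline{\beta}\,\mathrm{Id},\qquad \bar\beta,\underline\beta\in[\varepsilon,1-\varepsilon].$$ Let $R:D\to\mathbb{R}^n$ be nonexpansive, and define $T_\Lambda:D\to\mathbb{R}^n$ by $T_\Lambda \coloneqq (\mathrm{Id}-\Lambda)+\Lambda R$. Then $T_\Lambda$ is $\bar\beta$-averaged in the metric induced by $\Lambda^{-1}$, i.e., for all $x,y\in D$, $$\|T_\Lambda(x)-T_\Lambda(y)\|_{\Lambda^{-1}}^2\le \|x-y\|_{\Lambda^{-1}}^2-\frac{1-\bar\beta}{\bar\beta}\,\big\|(\mathrm{Id}-T_\Lambda)(x)-(\mathrm{Id}-T_\Lambda)(y)\big\|_{\Lambda^{-1}}^2 .$$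
   Context: For a symmetric positive-definite matrix $W$, $\|x\|_W^2\coloneqq\langle x,Wx\rangle$. An operator $R$ is nonexpansive if $\|R(x)-R(y)\|\le\|x-y\|$ for all $x,y$ in its domain. $A\succeq B$ means $A-B$ is positive semidefinite. Operators $T_\Lambda$ of this form are called operator-weighted averaged operators. *)

(* R^n is 'cV[R]_n over an arbitrary real closed field R
   (which covers the real numbers; only algebraic/order facts are needed). *)
From HB Require Import structures.
From mathcomp Require Import all_boot all_order all_algebra.
Set Implicit Arguments. Unset Strict Implicit. Unset Printing Implicit Defensive.
Import Order.TTheory GRing.Theory Num.Theory.
Local Open Scope ring_scope.

Definition dotv (R : ringType) (n : nat) (x y : 'cV[R]_n) : R := (x^T *m y) 0 0.

Definition normv (R : rcfType) (n : nat) (x : 'cV[R]_n) : R := Num.sqrt (dotv x x).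

Definition sqnormW (R : ringType) (n : nat) (W : 'M[R]_n) (x : 'cV[R]_n) : R :=
  dotv x (W *m x).

Definition psd_ge (R : numDomainType) (n : nat) (A B : 'M[R]_n) : Prop :=
  forall v : 'cV[R]_n, 0 <= dotv v ((A - B) *m v).

Definition nonexpansive_on (R : rcfType) (n : nat) (D : pred 'cV[R]_n)
  (Rop : 'cV[R]_n -> 'cV[R]_n) : Prop :=
  forall x y, x \in D -> y \in D -> normv (Rop x - Rop y) <= normv (x - y).

Definition T_Lambda (R : ringType) (n : nat) (Lam : 'M[R]_n)
  (Rop : 'cV[R]_n -> 'cV[R]_n) (x : 'cV[R]_n) : 'cV[R]_n :=
  (x - Lam *m x) + Lam *m Rop x.

(* With [u = x - y] and [d = u - (R x - R y)] one has
   [T x - T y = u - Lam d] and [(x - T x) - (y - T y) = Lam d], so in the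
   metric of [Lam^-1] the claim reduces to [<d, Lam d> <= 2 betabar <u, d>].
   This follows from [<d, Lam d> <= betabar |d|^2] and from
   [|d|^2 <= 2 <u, d>], which is nonexpansiveness of [R] rewritten.  The lower
   bound [Lam >= betaund Id] only serves to make [Lam] invertible. *)
From HB Require Import structures.
From mathcomp Require Import all_boot all_order all_algebra.
From mathcomp Require Import ring lra.
Set Implicit Arguments. Unset Strict Implicit. Unset Printing Implicit Defensive.
Import Order.TTheory GRing.Theory Num.Theory.
Local Open Scope ring_scope.

Section DotProduct.
Variables (R : comNzRingType) (n : nat).
Implicit Types (x y z : 'cV[R]_n) (A : 'M[R]_n).

Lemma dotvC x y : dotv x y = dotv y x.
Proof. by rewrite /dotv -{1}(trmxK (x^T *m y)) trmx_mul trmxK [in LHS]mxE. Qed.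

Lemma dotvBr x y z : dotv x (y - z) = dotv x y - dotv x z.
Proof. by rewrite /dotv mulmxBr !mxE. Qed.

Lemma dotvBl x y z : dotv (x - y) z = dotv x z - dotv y z.
Proof. by rewrite dotvC dotvBr !(dotvC z). Qed.

Lemma dotvZr (a : R) x y : dotv x (a *: y) = a * dotv x y.
Proof. by rewrite /dotv -scalemxAr mxE. Qed.

Lemma dotvMl A x y : dotv (A *m x) y = dotv x (A^T *m y).
Proof. by rewrite /dotv trmx_mul mulmxA. Qed.

Lemma dotv_sub_sub x y :
  dotv (x - y) (x - y) = dotv x x - 2 * dotv x y + dotv y y.
Proof. by rewrite !dotvBl !dotvBr (dotvC y x); ring. Qed.

Lemma dotv_mulBl A B x :
  dotv x ((A - B) *m x) = dotv x (A *m x) - dotv x (B *m x).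
Proof. by rewrite mulmxBl dotvBr. Qed.

End DotProduct.

Section DotProductPositivity.
Variables (R : realDomainType) (n : nat).
Implicit Types (x : 'cV[R]_n).

Lemma dotv_sumE x : dotv x x = \sum_k x k 0 ^+ 2.
Proof. by rewrite /dotv mxE; apply: eq_bigr => k _; rewrite mxE expr2. Qed.

Lemma dotv_ge0 x : 0 <= dotv x x.
Proof. by rewrite dotv_sumE; apply: sumr_ge0 => k _; apply: sqr_ge0. Qed.

Lemma dotv_eq0 x : dotv x x = 0 -> x = 0.
Proof.
rewrite dotv_sumE => /psumr_eq0P x2_eq0; apply/matrixP => i j.
rewrite (ord1 j) mxE; apply/eqP; rewrite -sqrf_eq0; apply/eqP.
by apply: x2_eq0 => // k _; apply: sqr_ge0.
Qed.

Lemma dotv_sub_le_of_le (u r : 'cV[R]_n) :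
  dotv r r <= dotv u u -> dotv (u - r) (u - r) <= 2 * dotv u (u - r).
Proof. by rewrite dotv_sub_sub dotvBr; lra. Qed.

Lemma psd_ge_scalar_le (b : R) (A : 'M[R]_n) x :
  psd_ge b%:M A -> dotv x (A *m x) <= b * dotv x x.
Proof. by move=> /(_ x); rewrite dotv_mulBl mul_scalar_mx dotvZr subr_ge0. Qed.

End DotProductPositivity.

Lemma normv_le (R : rcfType) (n : nat) (x y : 'cV[R]_n) :
  (normv x <= normv y) = (dotv x x <= dotv y y).
Proof. by rewrite /normv ler_sqrt ?dotv_ge0. Qed.

Lemma psd_ge_scalar_unitmx (R : realFieldType) (n : nat) (A : 'M[R]_n) (b : R) :
  0 < b -> psd_ge A b%:M -> A \in unitmx.
Proof.
move=> b_gt0 Ab; rewrite -row_free_unit -kermx_eq0; apply/rowV0P => w /sub_kermxP wA0.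
have Aw : dotv w^T (A *m w^T) = 0.
  by rewrite /dotv trmxK mulmxA wA0 mul0mx mxE.
have := Ab w^T; rewrite dotv_mulBl Aw mul_scalar_mx dotvZr sub0r oppr_ge0 => ww_le0.
have ww_eq0 : dotv w^T w^T = 0.
  by apply/eqP; rewrite eq_le dotv_ge0 andbT -(pmulr_rle0 _ b_gt0).
by rewrite -[w]trmxK (dotv_eq0 ww_eq0) trmx0.
Qed.

Section OperatorWeightedAverage.
Variables (R : comNzRingType) (n : nat) (Lam : 'M[R]_n) (Rop : 'cV[R]_n -> 'cV[R]_n).

Lemma T_Lambda_subE x y :
  T_Lambda Lam Rop x - T_Lambda Lam Rop y
  = (x - y) - Lam *m ((x - y) - (Rop x - Rop y)).
Proof. by rewrite /T_Lambda !mulmxBr; apply/matrixP => i j; rewrite !mxE; ring. Qed.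

Lemma T_Lambda_residual_subE x y :
  (x - T_Lambda Lam Rop x) - (y - T_Lambda Lam Rop y)
  = Lam *m ((x - y) - (Rop x - Rop y)).
Proof. by rewrite /T_Lambda !mulmxBr; apply/matrixP => i j; rewrite !mxE; ring. Qed.

End OperatorWeightedAverage.

Section InverseMetric.
Variables (R : comUnitRingType) (n : nat) (Lam : 'M[R]_n).
Hypotheses (Lam_sym : Lam^T = Lam) (Lam_unit : Lam \in unitmx).

Lemma dotv_mul_invmx d v : dotv (Lam *m d) (invmx Lam *m v) = dotv d v.
Proof. by rewrite dotvMl Lam_sym mulmxA mulmxV // mul1mx. Qed.

Lemma sqnorm_invmx_mul d : sqnormW (invmx Lam) (Lam *m d) = dotv d (Lam *m d).
Proof. exact: dotv_mul_invmx. Qed.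

Lemma sqnorm_invmx_sub_mul u d :
  sqnormW (invmx Lam) (u - Lam *m d)
  = sqnormW (invmx Lam) u - 2 * dotv u d + dotv d (Lam *m d).
Proof.
rewrite /sqnormW mulmxBr !dotvBr !dotvBl !dotv_mul_invmx.
by rewrite mulmxA mulVmx // mul1mx (dotvC d u); ring.
Qed.

End InverseMetric.

Theorem proposition1 (R : rcfType) (n : nat) (D : pred 'cV[R]_n)
  (eps betabar betaund : R) (Lam : 'M[R]_n) (Rop : 'cV[R]_n -> 'cV[R]_n) :
  (exists x0, x0 \in D) ->
  0 < eps -> eps < 1 ->
  Lam^T = Lam ->
  psd_ge (betabar%:M) Lam ->
  psd_ge Lam (betaund%:M) ->
  eps <= betabar -> betabar <= 1 - eps ->
  eps <= betaund -> betaund <= 1 - eps ->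
  nonexpansive_on D Rop ->
  forall x y, x \in D -> y \in D ->
    sqnormW (invmx Lam) (T_Lambda Lam Rop x - T_Lambda Lam Rop y)
    <= sqnormW (invmx Lam) (x - y)
       - (1 - betabar) / betabar *
         sqnormW (invmx Lam) ((x - T_Lambda Lam Rop x) - (y - T_Lambda Lam Rop y)).
Proof.
move=> _ eps_gt0 _ Lam_sym Lam_le Lam_ge bbar_ge _ bund_ge _ Rop_ne x y xD yD.
have bund_gt0 : 0 < betaund by lra.
have Lam_unit : Lam \in unitmx := psd_ge_scalar_unitmx bund_gt0 Lam_ge.
rewrite T_Lambda_subE T_Lambda_residual_subE.
rewrite sqnorm_invmx_sub_mul // sqnorm_invmx_mul //.
set d := (x - y) - _.
have dd_le : dotv d d <= 2 * dotv (x - y) d.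
  by apply: dotv_sub_le_of_le; rewrite -normv_le Rop_ne.
have Ld_le := psd_ge_scalar_le d Lam_le.
have bbar_gt0 : 0 < betabar by lra.
have average_gap : 0 <= betabar * (2 * dotv (x - y) d - dotv d d).
  by rewrite mulr_ge0 ?subr_ge0 // ltW.
rewrite -subr_ge0.
have -> : forall w p a : R, w - (1 - betabar) / betabar * a - (w - 2 * p + a)
                            = (2 * betabar * p - a) / betabar.
  by move=> w p a; field; rewrite gt_eqF.
by apply: divr_ge0; lra.
Qed.
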